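(* Neither the complex tame Butcher group $\mathcal B^{\mathbb C}_{TM}$ nor the tame Butcher group $\mathcal B_{TM}$ is locally exponential, i.e. for neither group does the Lie group exponential map restrict to a diffeomorphism from an open $0$-neighbourhood in the Lie algebra onto an open $e$-neighbourhood. More precisely, for every $\varepsilon\in\mathbb R\setminus\{0\}$ the element $a_\varepsilon\in\mathcal B_{TM}$ is not in the image of $\exp_{\mathcal B_{TM}}$, while $\mathbb R\to\mathcal B_{TM}$, $\varepsilon\mapsto a_\varepsilon$ ($a_0:=e$) is a continuous curve through $e$; hence the image of $\exp_{\mathcal B_{TM}}$ contains no identity neighbourhood.
   Context: $\mathcal T_0$ is the set of rooted trees plus the empty tree $\emptyset$; $\bullet$ is the one-vertex tree; $|\tau|$ the number of vertices. $\mathcal B^{\mathbb C}_{TM}$ is the complex tame Butcher group: maps $a\colon\mathcal T_0\to\mathbb C$ with $a(\emptyset)=1$ and $|a(\tau)|\le CK^{|\tau|}$ for some $C,K>0$, with product $(a\cdot b)(\tau)=\sum_{s\in\mathrm{OST}(\tau)}b(s_\tau)\prod_{\theta\in\tau\setminus s}a(\theta)$ (sum over ordered subtrees) and unit $e$ ($e(\emptyset)=1$, else 0); $\mathcal B_{TM}$ its real-valued subgroup. They are analytic Lie groups modelled on the Silva spaces $M^*_{\mathbb K}=\{a\in\bigcup_k\mathbb K^{\mathcal T_0}(\omega_k)\mid a(\emptyset)=0\}$ (inductive limit of the Banach spaces $\mathbb K^{\mathcal T_0}(\omega_k)=\{a\mid\sup_\tau|a(\tau)|2^{-k|\tau|}<\infty\}$)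 with global chart $a\mapsto a-e$. The Lie group exponential $\exp\colon\mathbf L(G)\to G$ is the map such that $t\mapsto\exp(tx)$ is a one-parameter group with derivative $x$ at $0$. For $\varepsilon\in\mathbb R\setminus\{0\}$, $a_\varepsilon(\emptyset)=1$, $a_\varepsilon(\bullet)=\varepsilon$ and $a_\varepsilon(\tau)=0$ for all other trees $\tau$. *)

From Stdlib Require Import Reals List Permutation.
Open Scope R_scope.

(* Planar rooted trees; non-planar rooted trees are their isomorphism classes
   (see [tree_iso]).  The empty tree is [None : option tree]. *)
Inductive tree : Type := Node : list tree -> tree.

Fixpoint tsize (t : tree) : nat :=
  match t with Node ts => S (list_sum (map tsize ts)) end.

Definition osize (t : option tree) : nat :=
  match t with None => 0%nat | Some t => tsize t end.

Inductive tree_iso : tree -> tree -> Prop :=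
| iso_node : forall ts us us',
    Permutation us us' -> Forall2 tree_iso ts us' -> tree_iso (Node ts) (Node us).

Record Scal := mkScal {
  K :> Type; K0 : K; K1 : K;
  Kadd : K -> K -> K; Kmul : K -> K -> K; Kopp : K -> K;
  Kabs : K -> R; KofR : R -> K }.

Definition Rsc : Scal := mkScal R 0 1 Rplus Rmult Ropp Rabs (fun r => r).

Definition Cx := (R * R)%type.
Definition Cadd (z w : Cx) : Cx := (fst z + fst w, snd z + snd w).
Definition Cmul (z w : Cx) : Cx :=
  (fst z * fst w - snd z * snd w, fst z * snd w + snd z * fst w).
Definition Copp (z : Cx) : Cx := (- fst z, - snd z).
Definition Cabs (z : Cx) : R := sqrt (fst z * fst z + snd z * snd z).
Definition Csc : Scal := mkScal Cx (0,0) (1,0) Cadd Cmul Copp Cabs (fun r => (r,0)).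

Section TreeMaps.
Variable F : Scal.

Definition tmap := option tree -> K F.

(* maps on T_0 = maps on non-planar trees *)
Definition invariant (a : tmap) : Prop :=
  forall t u, tree_iso t u -> a (Some t) = a (Some u).

Definition Ksum (l : list (K F)) : K F := fold_right (Kadd F) (K0 F) l.
Definition Kprod (l : list (K F)) : K F := fold_right (Kmul F) (K1 F) l.

(** Ordered subtrees.  [ost_ne t] lists, for every subtree s of t containing the
    root, the pair (s, forest t \ s). *)
Fixpoint combos (l : list (list (option tree * list tree))) : list (list tree * list tree) :=
  match l with
  | nil => (nil, nil) :: nil
  | o :: os =>
      flat_map (fun p =>
        map (fun q => (match fst p with Some s => s :: fst q | None => fst q end,
                       snd p ++ snd q)) (combos os)) o
  end.

Fixpoint ost_ne (t : tree) : list (tree * list tree) :=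
  match t with
  | Node ts =>
      map (fun q => (Node (fst q), snd q))
        (combos (map (fun ti => (None, ti :: nil) ::
                    map (fun p => (Some (fst p), snd p)) (ost_ne ti)) ts))
  end.

Definition ost (t : tree) : list (option tree * list tree) :=
  (None, t :: nil) :: map (fun p => (Some (fst p), snd p)) (ost_ne t).

Definition bmul (a b : tmap) : tmap := fun tau =>
  match tau with
  | None => b None
  | Some t => Ksum (map (fun p => Kmul F (b (fst p)) (Kprod (map (fun th => a (Some th)) (snd p)))) (ost t))
  end.

Definition unit_e : tmap := fun tau => match tau with None => K1 F | Some _ => K0 F end.

Definition tame (a : tmap) : Prop :=
  exists C Kc, 0 < C /\ 0 < Kc /\ forall tau, Kabs F (a tau) <= C * Kc ^ (osize tau).

Definition inG (a : tmap) : Prop := a None = K1 F /\ invariant a /\ tame a.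

Definition fsub (f g : tmap) : tmap := fun tau => Kadd F (f tau) (Kopp F (g tau)).
Definition fscale (r : R) (f : tmap) : tmap := fun tau => Kmul F (KofR F r) (f tau).
Definition fzero : tmap := fun _ => K0 F.

(* the Banach step K^{T_0}(omega_k), restricted to a(empty)=0 *)
Definition inE (k : nat) (f : tmap) : Prop :=
  f None = K0 F /\ invariant f /\
  exists C, forall tau, Kabs F (f tau) <= C * 2 ^ (k * osize tau).

Definition inM (f : tmap) : Prop := exists k, inE k f.

(* open sets of the inductive limit topology: U meets every step in an open set *)
Definition openM (U : tmap -> Prop) : Prop :=
  forall k a, inE k a -> U a ->
    exists r, 0 < r /\ forall b, inE k b ->
      (forall tau, Kabs F (fsub b a tau) <= r * 2 ^ (k * osize tau)) -> U b.


Definition lim0 (f : R -> tmap) (L : tmap) : Prop :=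
  forall U, openM U -> U L ->
    exists d, 0 < d /\ forall h, h <> 0 -> Rabs h < d -> U (f h).

Definition cont_at (c : R -> tmap) (t : R) : Prop :=
  forall U, openM U -> U (c t) ->
    exists d, 0 < d /\ forall s, Rabs (s - t) < d -> U (c s).

Definition is_deriv (c c' : R -> tmap) : Prop :=
  forall t, lim0 (fun h => fscale (/ h) (fsub (c (t + h)) (c t))) (c' t).

Definition smooth_curve (c : R -> tmap) : Prop :=
  exists (D : nat -> R -> tmap),
    (forall t, D 0%nat t = c t) /\
    (forall n t, inM (D n t)) /\
    (forall n t, cont_at (D n) t) /\
    (forall n, is_deriv (D n) (D (S n))).

(* smooth one-parameter group R -> G (G modelled on M*_K via the chart a |-> a - e) *)
Definition one_param (g : R -> tmap) : Prop :=
  (forall t, inG (g t)) /\ g 0 = unit_e /\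
  (forall s t, g (s + t) = bmul (g s) (g t)) /\
  smooth_curve (fun t => fsub (g t) unit_e).

(* a lies in the image of the Lie group exponential: a = exp(x), where
   t |-> exp(tx) is the one-parameter group with derivative x at 0 *)
Definition in_exp_image (a : tmap) : Prop :=
  exists x, inM x /\ exists g, one_param g /\
    lim0 (fun h => fscale (/ h) (fsub (g h) (g 0))) x /\ g 1 = a.

Definition exp_image_contains_id_nbhd : Prop :=
  exists V, openM V /\ V fzero /\
    forall a, inG a -> V (fsub a unit_e) -> in_exp_image a.

Definition a_eps (eps : R) : tmap := fun tau =>
  match tau with
  | None => K1 F
  | Some (Node nil) => KofR F eps
  | Some _ => K0 F
  end.

End TreeMaps.

(* Suppose [a_eps = exp x] and let [g] be the one-parameter group [t |-> exp (t x)].  On the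
   bushy trees [B_n] (a root with [n] leaves) the Butcher product is binomial, so
   [g (t + h) = g t . g h] turns the coordinates [t |-> g t (B_n)] into a triangular linear
   system of ODEs driven by [x (bullet) = eps].  Solving it and evaluating at [t = 1], where
   [a_eps] vanishes on every [B_n] with [n >= 1], shows that [z_n = Re x (B_n) / eps^(n+1)]
   satisfies the recurrence of the Bernoulli numbers.  Their exponential generating function
   [Z] satisfies [Z(t) e^t = Z(t) + t]; tameness of [x] would make [Z] entire, and comparing
   imaginary parts at [t = 2 pi i] then gives [0 = 2 pi].  As [a_eps -> e] when [eps -> 0],
   no identity neighbourhood lies in the image of [exp]. *)

From Stdlib Require Import Reals Lra Lia List Permutation FunctionalExtensionality Factorial.
From Coquelicot Require Import Coquelicot.
Open Scope R_scope.

Fixpoint binom (n k : nat) : nat :=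
  match n, k with
  | _, O => 1%nat
  | O, S _ => 0%nat
  | S n', S k' => (binom n' k' + binom n' (S k'))%nat
  end.

Lemma binom_small n k : (n < k)%nat -> binom n k = 0%nat.
Proof.
  revert k; induction n; intros k H; destruct k; simpl; try lia; auto.
  rewrite !IHn; lia.
Qed.

Lemma binom_diag n : binom n n = 1%nat.
Proof. induction n; simpl; auto. rewrite IHn, binom_small; lia. Qed.

Lemma binom_fact n k : (k <= n)%nat -> (binom n k * fact k * fact (n - k) = fact n)%nat.
Proof.
  revert k; induction n; intros k H.
  - destruct k; simpl; lia.
  - destruct k as [|k]; [simpl; lia|].
    simpl binom. replace (S n - S k)%nat with (n - k)%nat by lia.
    destruct (Nat.eq_dec k n) as [->|Hne].
    + rewrite binom_diag, binom_small, Nat.sub_diag by lia. simpl. lia.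
    + pose proof (IHn k ltac:(lia)) as H1.
      pose proof (IHn (S k) ltac:(lia)) as H2.
      replace (n - k)%nat with (S (n - S k)) in * by lia.
      change (fact (S k)) with (S k * fact k)%nat in *.
      change (fact (S (n - S k))) with (S (n - S k) * fact (n - S k))%nat in *.
      change (fact (S n)) with (S n * fact n)%nat.
      nia.
Qed.

Lemma INR_fact_gt0 n : 0 < INR (fact n).
Proof. apply lt_0_INR, lt_O_fact. Qed.

Lemma binom_INR n k : (k <= n)%nat ->
  INR (binom n k) = INR (fact n) / (INR (fact k) * INR (fact (n - k))).
Proof.
  intro H. rewrite <- (binom_fact n k H), !mult_INR.
  pose proof (INR_fact_gt0 k). pose proof (INR_fact_gt0 (n - k)). field; lra.
Qed.

Lemma binom_succ_mul n k : (k <= n)%nat -> (binom (S n) k * (S n - k) = S n * binom n k)%nat.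
Proof.
  intro H.
  pose proof (binom_fact (S n) k ltac:(lia)) as H1.
  pose proof (binom_fact n k H) as H2.
  replace (S n - k)%nat with (S (n - k)) in * by lia.
  change (fact (S (n - k))) with (S (n - k) * fact (n - k))%nat in H1.
  change (fact (S n)) with (S n * fact n)%nat in H1.
  assert (0 < fact k * fact (n - k))%nat by (pose proof (lt_O_fact k); pose proof (lt_O_fact (n - k)); nia).
  apply (Nat.mul_cancel_r _ _ (fact k * fact (n - k))); nia.
Qed.

(* The unique solution is the sequence of Bernoulli numbers (with [z 1 = -1/2]), whose
   exponential generating function [t / (e^t - 1)] has a pole at [2 pi i]. *)
Definition bernoulli_seq (z : nat -> R) : Prop :=
  z 0%nat = 1 /\
  forall n, (1 <= n)%nat -> sum_f_R0 (fun j => INR (binom n j) * z j / INR (n - j + 1)) n = 0.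

Lemma bernoulli_seq_binomial_sum z : bernoulli_seq z ->
  forall n, sum_f_R0 (fun k => INR (binom n k) * z k) n = z n + (if Nat.eqb n 1 then 1 else 0).
Proof.
  intros [H0 Hr] [|N]; [simpl; lra|].
  rewrite tech5, binom_diag. simpl INR at 2.
  assert (E : sum_f_R0 (fun k => INR (binom (S N) k) * z k) N =
              INR (S N) * sum_f_R0 (fun j => INR (binom N j) * z j / INR (N - j + 1)) N).
  { rewrite scal_sum. apply sum_eq. intros i Hi.
    pose proof (f_equal INR (binom_succ_mul N i Hi)) as Hb. rewrite !mult_INR in Hb.
    replace (S N - i)%nat with (N - i + 1)%nat in Hb by lia.
    assert (0 < INR (N - i + 1)) by (apply lt_0_INR; lia).
    replace (INR (binom (S N) i)) with (INR (S N) * INR (binom N i) / INR (N - i + 1))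
      by (rewrite <- Hb; field; lra).
    field. lra. }
  rewrite E. destruct N as [|N].
  - simpl. rewrite H0. lra.
  - rewrite Hr by lia. simpl Nat.eqb. lra.
Qed.

(* [ipow k = (Re i^k, Im i^k)] *)
Fixpoint ipow (k : nat) : R * R :=
  match k with O => (1, 0) | S k => (- snd (ipow k), fst (ipow k)) end.

Lemma ipow_add k m :
  snd (ipow (k + m)) = fst (ipow k) * snd (ipow m) + snd (ipow k) * fst (ipow m) /\
  fst (ipow (k + m)) = fst (ipow k) * fst (ipow m) - snd (ipow k) * snd (ipow m).
Proof.
  induction k; simpl.
  - split; ring.
  - destruct IHk as [A B]. rewrite A, B. split; ring.
Qed.

Lemma ipow_parity n :
  fst (ipow (2 * n)) = (-1) ^ n /\ snd (ipow (2 * n)) = 0 /\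
  fst (ipow (2 * n + 1)) = 0 /\ snd (ipow (2 * n + 1)) = (-1) ^ n.
Proof.
  induction n as [|n (A & B & C & D)]; [simpl; repeat split; ring|].
  replace (2 * S n + 1)%nat with (S (S (2 * n + 1))) by lia.
  replace (2 * S n)%nat with (S (2 * n + 1)) by lia.
  cbn [ipow fst snd]. rewrite C, D. repeat split; simpl; ring.
Qed.

Lemma ipow_bound k : Rabs (fst (ipow k)) <= 1 /\ Rabs (snd (ipow k)) <= 1.
Proof.
  induction k; simpl.
  - rewrite Rabs_R1, Rabs_R0; lra.
  - rewrite Rabs_Ropp. tauto.
Qed.

Lemma is_series_zero : is_series (fun _ : nat => 0) 0.
Proof.
  apply is_series_Reals. intros e He. exists 0%nat. intros. unfold R_dist.
  rewrite sum_cte, Rmult_0_l, Rminus_0_r, Rabs_R0. lra.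
Qed.

Lemma is_series_cos_ipow x : is_series (fun n => fst (ipow n) / INR (fact n) * x ^ n) (cos x).
Proof.
  apply is_pseries_R. replace (cos x) with (cos x + x * 0) by ring.
  apply is_pseries_odd_even; apply is_pseries_R.
  - assert (Hc : cos_in (Rsqr x) (cos x)) by (unfold cos; destruct (exist_cos (Rsqr x)); exact c).
    apply is_series_Reals in Hc. revert Hc. apply is_series_ext. intro n.
    destruct (ipow_parity n) as (-> & _). unfold cos_n, Rsqr. now replace (x ^ 2) with (x * x) by ring.
  - apply is_series_ext with (a := fun _ => 0); [|apply is_series_zero].
    intro n. destruct (ipow_parity n) as (_ & _ & -> & _). unfold Rdiv. now rewrite !Rmult_0_l.
Qed.

Lemma is_series_sin_ipow x : is_series (fun n => snd (ipow n) / INR (fact n) * x ^ n) (sin x).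
Proof.
  apply is_pseries_R. unfold sin. destruct (exist_sin (Rsqr x)) as [l Hl].
  replace (x * l) with (0 + x * l) by ring.
  apply is_pseries_odd_even; apply is_pseries_R.
  - apply is_series_ext with (a := fun _ => 0); [|apply is_series_zero].
    intro n. destruct (ipow_parity n) as (_ & -> & _ & _). unfold Rdiv. now rewrite !Rmult_0_l.
  - apply is_series_Reals in Hl. revert Hl. apply is_series_ext. intro n.
    destruct (ipow_parity n) as (_ & _ & _ & ->). unfold sin_n, Rsqr. now replace (x ^ 2) with (x * x) by ring.
Qed.

Lemma is_series_indicator1 th : is_series (fun n => if Nat.eqb n 1 then th else 0) th.
Proof.
  assert (S1 : forall n, sum_f_R0 (fun n => if Nat.eqb n 1 then th else 0) (S n) = th).
  { induction n; [simpl; ring|]. rewrite tech5, IHn. destruct n; simpl; ring. }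
  apply is_series_Reals. intros e He. exists 1%nat. intros [|n] Hn; [lia|].
  unfold R_dist. rewrite S1, Rminus_eq_0, Rabs_R0. lra.
Qed.

Lemma ex_series_abs_exp_bounded (u z : nat -> R) (A M th : R) :
  (forall k, Rabs (u k) <= 1) -> (forall n, Rabs (z n) <= A * M ^ n) ->
  ex_series (fun k => Rabs (u k * z k / INR (fact k) * th ^ k)).
Proof.
  intros Hu Hz.
  apply (@ex_series_le R_AbsRing R_CompleteNormedModule _
           (fun k => Rabs A * ((Rabs M * Rabs th) ^ k / INR (fact k)))).
  2:{ exists (Rabs A * exp (Rabs M * Rabs th)).
      pose proof (is_series_scal_l (Rabs A) _ _
                    (proj1 (is_pseries_R _ _ _) (is_exp_Reals (Rabs M * Rabs th)))) as H.
      revert H. apply is_series_ext. intro n. change scal with Rmult. simpl. unfold Rdiv. ring. }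
  intro n. change (norm (Rabs ?x)) with (Rabs (Rabs x)). rewrite Rabs_Rabsolu.
  pose proof (INR_fact_gt0 n).
  rewrite !Rabs_mult, Rabs_div, (Rabs_right (INR (fact n))) by lra.
  rewrite <- !RPow_abs, Rpow_mult_distr.
  assert (Rabs (z n) <= Rabs A * Rabs M ^ n).
  { rewrite RPow_abs, <- Rabs_mult. eapply Rle_trans; [apply Hz|apply Rle_abs]. }
  pose proof (Hu n). pose proof (Rabs_pos (u n)). pose proof (Rabs_pos (z n)).
  pose proof (pow_le (Rabs th) n (Rabs_pos th)).
  assert (Rabs (u n) * Rabs (z n) <= Rabs A * Rabs M ^ n) by nra.
  rewrite Rabs_mult. unfold Rdiv.
  apply Rle_trans with (Rabs A * Rabs M ^ n * / INR (fact n) * Rabs th ^ n); [|right; ring].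
  apply Rmult_le_compat_r; [lra|].
  apply Rmult_le_compat_r; [left; apply Rinv_0_lt_compat|]; lra.
Qed.

Section BernoulliSeries.
Variable z : nat -> R.
Hypothesis bernoulli_z : bernoulli_seq z.
Variable th : R.

(* [Z(i th) = \sum_k z_k (i th)^k / k! = Series re_term + i Series im_term] *)
Let re_term k := fst (ipow k) * z k / INR (fact k) * th ^ k.
Let im_term k := snd (ipow k) * z k / INR (fact k) * th ^ k.
Let cos_term m := fst (ipow m) / INR (fact m) * th ^ m.
Let sin_term m := snd (ipow m) / INR (fact m) * th ^ m.

(* The imaginary part of the coefficient identity [Z(t) e^t = Z(t) + t] at [t = i th]. *)
Lemma bernoulli_cauchy_product_im n :
  sum_f_R0 (fun k => re_term k * sin_term (n - k)) n +
  sum_f_R0 (fun k => im_term k * cos_term (n - k)) n =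
  im_term n + (if Nat.eqb n 1 then th else 0).
Proof.
  rewrite <- sum_plus.
  transitivity (sum_f_R0 (fun k => (INR (binom n k) * z k) * (snd (ipow n) / INR (fact n) * th ^ n)) n).
  - apply sum_eq. intros k Hk. unfold re_term, im_term, sin_term, cos_term.
    destruct (ipow_add k (n - k)) as [E _].
    replace (k + (n - k))%nat with n in E by lia.
    rewrite E, binom_INR by lia.
    replace (th ^ n) with (th ^ k * th ^ (n - k)) by (rewrite <- pow_add; f_equal; lia).
    pose proof (INR_fact_gt0 n). pose proof (INR_fact_gt0 k). pose proof (INR_fact_gt0 (n - k)).
    field. lra.
  - rewrite <- scal_sum, Rmult_comm, (bernoulli_seq_binomial_sum z bernoulli_z). unfold im_term.
    pose proof (INR_fact_gt0 n).
    destruct (Nat.eqb_spec n 1) as [->|Hn]; simpl; field; lra.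
Qed.

Lemma bernoulli_series_im_identity A M :
  (forall n, Rabs (z n) <= A * M ^ n) ->
  Series re_term * sin th + Series im_term * cos th = Series im_term + th.
Proof.
  intro Hz.
  assert (Are : ex_series (fun k => Rabs (re_term k)))
    by (apply (ex_series_abs_exp_bounded _ z A M); auto; intro; apply ipow_bound).
  assert (Aim : ex_series (fun k => Rabs (im_term k)))
    by (apply (ex_series_abs_exp_bounded _ z A M); auto; intro; apply ipow_bound).
  assert (one_bounded : forall n, Rabs ((fun _ => 1) n) <= 1 * 1 ^ n)
    by (intro; rewrite pow1, Rabs_R1; lra).
  assert (Acos : ex_series (fun k => Rabs (cos_term k))).
  { apply (ex_series_ext (fun k => Rabs (fst (ipow k) * 1 / INR (fact k) * th ^ k))).
    - intro; unfold cos_term; rewrite Rmult_1_r; reflexivity.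
    - apply (ex_series_abs_exp_bounded _ (fun _ => 1) 1 1); auto. intro; apply ipow_bound. }
  assert (Asin : ex_series (fun k => Rabs (sin_term k))).
  { apply (ex_series_ext (fun k => Rabs (snd (ipow k) * 1 / INR (fact k) * th ^ k))).
    - intro; unfold sin_term; rewrite Rmult_1_r; reflexivity.
    - apply (ex_series_abs_exp_bounded _ (fun _ => 1) 1 1); auto. intro; apply ipow_bound. }
  assert (Sre : is_series re_term (Series re_term)) by (apply Series_correct, ex_series_Rabs, Are).
  assert (Sim : is_series im_term (Series im_term)) by (apply Series_correct, ex_series_Rabs, Aim).
  pose proof (is_series_plus _ _ _ _
    (is_series_mult _ _ _ _ Sre (is_series_sin_ipow th) Are Asin)
    (is_series_mult _ _ _ _ Sim (is_series_cos_ipow th) Aim Acos)) as L.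
  pose proof (is_series_plus _ _ _ _ Sim (is_series_indicator1 th)) as R.
  apply (is_series_ext _ _ _ bernoulli_cauchy_product_im) in L.
  apply is_series_unique in L. apply is_series_unique in R.
  change plus with Rplus in L, R. rewrite <- L. exact R.
Qed.

End BernoulliSeries.

Theorem bernoulli_not_exp_bounded z A M :
  bernoulli_seq z -> ~ (forall n, Rabs (z n) <= A * M ^ n).
Proof.
  intros Hz Hb.
  pose proof (bernoulli_series_im_identity z Hz (2 * PI) A M Hb) as H.
  rewrite sin_2PI, cos_2PI in H. pose proof PI_RGT_0. lra.
Qed.

Definition bullet : tree := Node nil.
Definition bushy (n : nat) : tree := Node (repeat bullet n).

(* The two ordered subtrees of [bullet] as seen from its parent: cut it or keep it. *)
Definition bullet_cuts : list (option tree * list tree) :=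
  (None, bullet :: nil) :: (Some bullet, nil) :: nil.

Lemma ost_ne_bushy n :
  ost_ne (bushy n) = map (fun q => (Node (fst q), snd q)) (combos (repeat bullet_cuts n)).
Proof.
  unfold bushy. cbn [ost_ne]. do 2 f_equal. induction n; simpl; [reflexivity|].
  now rewrite IHn.
Qed.

Lemma tsize_bushy n : tsize (bushy n) = S n.
Proof. unfold bushy; simpl. f_equal. induction n; simpl; auto. Qed.

Lemma tree_iso_bullet t u : tree_iso t u -> (t = bullet <-> u = bullet).
Proof.
  intro H. inversion H as [ts us us' Hp Hf]; subst. unfold bullet.
  split; intro E; injection E; intros ->.
  - inversion Hf; subst. apply Permutation_sym, Permutation_nil in Hp. now subst.
  - apply Permutation_nil in Hp. subst us'. now inversion Hf.
Qed.

(* [a_eps eps - e] *)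
Definition delta_bullet (eps : R) (tau : option tree) : R :=
  match tau with Some (Node nil) => eps | _ => 0 end.

Lemma delta_bullet_invariant eps t u :
  tree_iso t u -> delta_bullet eps (Some t) = delta_bullet eps (Some u).
Proof.
  intro H. destruct (tree_iso_bullet t u H) as [A B]. unfold bullet in A, B.
  destruct t as [[|? ?]], u as [[|? ?]]; simpl; auto.
  - discriminate (A eq_refl).
  - discriminate (B eq_refl).
Qed.

Lemma delta_bullet_abs_le eps tau : Rabs (delta_bullet eps tau) <= Rabs eps.
Proof. destruct tau as [[[|? ?]]|]; simpl; rewrite ?Rabs_R0; lra || apply Rabs_pos. Qed.

Lemma delta_bullet_sub_abs_le s t tau :
  Rabs (delta_bullet s tau - delta_bullet t tau) <= Rabs (s - t).
Proof.
  destruct tau as [[[|? ?]]|]; simpl; [lra| |]; rewrite Rminus_0_r, Rabs_R0; apply Rabs_pos.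
Qed.

Lemma derivable_pt_lim_0_const (u : R -> R) :
  (forall t, derivable_pt_lim u t 0) -> forall t, u t = u 0.
Proof.
  intro H.
  pose (pr := fun x => exist (fun l => derivable_pt_lim u x l) 0 (H x) : derivable_pt u x).
  intro t. apply (null_derivative_1 u pr). intro x. reflexivity.
Qed.

Lemma derivable_pt_lim_pow_antideriv m t :
  derivable_pt_lim (fun s => s ^ S m / INR (S m)) t (t ^ m).
Proof.
  apply is_derive_Reals. auto_derive; [exact I|].
  change (match m with 0%nat => 1 | S _ => INR m + 1 end) with (INR (S m)).
  assert (0 < INR (S m)) by (apply lt_0_INR; lia). field. lra.
Qed.

(* Laws shared by [Rsc] and [Csc].  The coordinates [re] and [im] (for [Rsc]: the identity
   and [0]) reduce uniqueness of solutions of [y' = D] to the real mean value theorem. *)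
Set Implicit Arguments.
Record ScalLaws (F : Scal) : Type := {
  re : K F -> R; im : K F -> R;
  Kadd_assoc : forall a b c, Kadd F a (Kadd F b c) = Kadd F (Kadd F a b) c;
  Kadd_comm : forall a b, Kadd F a b = Kadd F b a;
  Kadd_0l : forall a, Kadd F (K0 F) a = a;
  Kadd_opp_r : forall a, Kadd F a (Kopp F a) = K0 F;
  Kmul_assoc : forall a b c, Kmul F a (Kmul F b c) = Kmul F (Kmul F a b) c;
  Kmul_comm : forall a b, Kmul F a b = Kmul F b a;
  Kmul_1l : forall a, Kmul F (K1 F) a = a;
  Kmul_addl : forall a b c, Kmul F (Kadd F a b) c = Kadd F (Kmul F a c) (Kmul F b c);
  KofR_add : forall r s, KofR F (r + s) = Kadd F (KofR F r) (KofR F s);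
  KofR_mul : forall r s, KofR F (r * s) = Kmul F (KofR F r) (KofR F s);
  KofR_1 : KofR F 1 = K1 F;
  KofR_0 : KofR F 0 = K0 F;
  Kabs_triangle : forall a b, Kabs F (Kadd F a b) <= Kabs F a + Kabs F b;
  Kabs_mul : forall a b, Kabs F (Kmul F a b) = Kabs F a * Kabs F b;
  Kabs_KofR : forall r, Kabs F (KofR F r) = Rabs r;
  Kabs_ge0 : forall a, 0 <= Kabs F a;
  re_add : forall a b, re (Kadd F a b) = re a + re b;
  im_add : forall a b, im (Kadd F a b) = im a + im b;
  re_scal : forall r a, re (Kmul F (KofR F r) a) = r * re a;
  im_scal : forall r a, im (Kmul F (KofR F r) a) = r * im a;
  re_le_abs : forall a, Rabs (re a) <= Kabs F a;
  im_le_abs : forall a, Rabs (im a) <= Kabs F a;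
  re_KofR : forall r, re (KofR F r) = r;
  re_im_inj : forall a b, re a = re b -> im a = im b -> a = b
}.
Unset Implicit Arguments.

Section Scalars.
Variables (F : Scal) (L : ScalLaws F).

Local Notation "a +k b" := (Kadd F a b) (at level 50, left associativity).
Local Notation "a *k b" := (Kmul F a b) (at level 40, left associativity).
Local Notation "-k a" := (Kopp F a) (at level 35).
Local Notation k0 := (K0 F).
Local Notation k1 := (K1 F).
Local Notation ofR := (KofR F).
Local Notation kabs := (Kabs F).

Lemma K_ring : ring_theory k0 k1 (Kadd F) (Kmul F) (fun a b => a +k -k b) (Kopp F) eq.
Proof.
  constructor; intros; try reflexivity.
  - apply (Kadd_0l L).   - apply (Kadd_comm L).  - apply (Kadd_assoc L).
  - apply (Kmul_1l L).   - apply (Kmul_comm L).  - apply (Kmul_assoc L).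
  - apply (Kmul_addl L). - apply (Kadd_opp_r L).
Qed.
Add Ring K_ring : K_ring.

Lemma KofR_opp r : ofR (- r) = -k ofR r.
Proof.
  assert (H : ofR (- r) +k ofR r = k0)
    by (rewrite <- (KofR_add L), <- (KofR_0 L); f_equal; ring).
  transitivity (ofR (- r) +k ofR r +k -k ofR r); [ring|]. rewrite H. ring.
Qed.

Lemma Kabs_0 : kabs k0 = 0.
Proof. rewrite <- (KofR_0 L), (Kabs_KofR L). apply Rabs_R0. Qed.

Lemma Kabs_sub_triangle a b c : kabs (a +k -k c) <= kabs (a +k -k b) + kabs (b +k -k c).
Proof.
  replace (a +k -k c) with ((a +k -k b) +k (b +k -k c)) by ring. apply (Kabs_triangle L).
Qed.

Lemma Kabs_KofR_sub r s : kabs (ofR r +k -k ofR s) = Rabs (r - s).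
Proof. now rewrite <- KofR_opp, <- (KofR_add L), (Kabs_KofR L). Qed.

Lemma linear_opp (pr : K F -> R) :
  (forall r a, pr (ofR r *k a) = r * pr a) -> forall a, pr (-k a) = - pr a.
Proof.
  intros Hsc a. replace (-k a) with (ofR (- (1)) *k a).
  - rewrite Hsc. ring.
  - rewrite KofR_opp, (KofR_1 L). ring.
Qed.

Definition Klim (f : R -> K F) (l : K F) : Prop :=
  forall e, 0 < e -> exists d, 0 < d /\
    forall h, h <> 0 -> Rabs h < d -> kabs (f h +k -k l) < e.

Definition Kder (f : R -> K F) (t : R) (l : K F) : Prop :=
  Klim (fun h => ofR (/ h) *k (f (t + h) +k -k f t)) l.

Lemma Klim_ext f g l : (forall h, h <> 0 -> f h = g h) -> Klim f l -> Klim g l.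
Proof.
  intros E H e He. destruct (H e He) as (d & Hd & Hh). exists d; split; auto.
  intros h H1 H2. rewrite <- E by auto. auto.
Qed.

Lemma Klim_add f g a b : Klim f a -> Klim g b -> Klim (fun h => f h +k g h) (a +k b).
Proof.
  intros Hf Hg e He.
  destruct (Hf (e / 2)) as (d1 & Hd1 & H1); [lra|].
  destruct (Hg (e / 2)) as (d2 & Hd2 & H2); [lra|].
  exists (Rmin d1 d2); split; [apply Rmin_case; lra|]. intros h Hh Hd.
  specialize (H1 h Hh (Rlt_le_trans _ _ _ Hd (Rmin_l _ _))).
  specialize (H2 h Hh (Rlt_le_trans _ _ _ Hd (Rmin_r _ _))).
  replace (f h +k g h +k -k (a +k b)) with ((f h +k -k a) +k (g h +k -k b)) by ring.
  eapply Rle_lt_trans; [apply (Kabs_triangle L)|lra].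
Qed.

Lemma Klim_scal c f a : Klim f a -> Klim (fun h => c *k f h) (c *k a).
Proof.
  intros Hf e He. pose proof (Kabs_ge0 L c) as Hc.
  destruct (Hf (e / (kabs c + 1))) as (d & Hd & H); [apply Rdiv_lt_0_compat; lra|].
  exists d; split; auto. intros h H1 H2. specialize (H h H1 H2).
  replace (c *k f h +k -k (c *k a)) with (c *k (f h +k -k a)) by ring.
  rewrite (Kabs_mul L). pose proof (Kabs_ge0 L (f h +k -k a)).
  apply Rle_lt_trans with ((kabs c + 1) * kabs (f h +k -k a)); [nra|].
  replace e with ((kabs c + 1) * (e / (kabs c + 1))) by (field; lra).
  apply Rmult_lt_compat_l; lra.
Qed.

Fixpoint KsumN (n : nat) (f : nat -> K F) : K F :=
  match n with O => f O | S m => KsumN m f +k f (S m) end.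

Lemma KsumN_ext n f g : (forall j, (j <= n)%nat -> f j = g j) -> KsumN n f = KsumN n g.
Proof.
  induction n; intro H; simpl; [apply H; lia|].
  rewrite IHn by (intros; apply H; lia). now rewrite H by lia.
Qed.

Lemma KsumN_add n f g : KsumN n (fun j => f j +k g j) = KsumN n f +k KsumN n g.
Proof. induction n; simpl; auto. rewrite IHn. ring. Qed.

Lemma KsumN_shift n f : KsumN (S n) f = f O +k KsumN n (fun j => f (S j)).
Proof.
  induction n; [simpl; ring|].
  change (KsumN (S (S n)) f) with (KsumN (S n) f +k f (S (S n))). rewrite IHn. simpl. ring.
Qed.

Lemma KsumN_scal n c f : KsumN n (fun j => c *k f j) = c *k KsumN n f.
Proof. induction n; simpl; auto. rewrite IHn. ring. Qed.

Lemma KsumN_0 n : KsumN n (fun _ => k0) = k0.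
Proof. induction n; simpl; auto. rewrite IHn. ring. Qed.

Lemma re_KsumN_scal n (c : nat -> R) f :
  re L (KsumN n (fun j => ofR (c j) *k f j)) = sum_f_R0 (fun j => c j * re L (f j)) n.
Proof. induction n; simpl; rewrite ?(re_add L), ?IHn; now rewrite (re_scal L). Qed.

Lemma Klim_KsumN n (f : nat -> R -> K F) (l : nat -> K F) :
  (forall j, (j <= n)%nat -> Klim (f j) (l j)) ->
  Klim (fun h => KsumN n (fun j => f j h)) (KsumN n l).
Proof.
  induction n; intro H; simpl; [apply H; lia|].
  apply Klim_add; [apply IHn; intros|]; apply H; lia.
Qed.

Lemma Kder_KsumN n (f : nat -> R -> K F) (l : nat -> K F) t :
  (forall j, (j <= n)%nat -> Kder (f j) t (l j)) ->
  Kder (fun s => KsumN n (fun j => f j s)) t (KsumN n l).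
Proof.
  intro H. eapply Klim_ext; [|apply Klim_KsumN; exact H].
  intros h _. cbv beta. clear H. induction n; simpl; auto. rewrite IHn. ring.
Qed.

Lemma Kder_scal c f t l : Kder f t l -> Kder (fun s => c *k f s) t (c *k l).
Proof.
  intro H. eapply Klim_ext; [|apply (Klim_scal c); exact H].
  intros h _. cbv beta. ring.
Qed.

Lemma Kder_KofR (p : R -> R) t v : derivable_pt_lim p t v -> Kder (fun s => ofR (p s)) t (ofR v).
Proof.
  intros H e He. destruct (H e He) as [d Hd]. exists d; split; [apply cond_pos|].
  intros h H1 H2.
  rewrite <- KofR_opp, <- (KofR_add L), <- (KofR_mul L), Kabs_KofR_sub.
  replace (/ h * (p (t + h) + - p t) - v) with ((p (t + h) - p t) / h - v) by (field; auto).
  exact (Hd h H1 H2).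
Qed.

Lemma Kder_unique_coord (pr : K F -> R) :
  (forall a b, pr (a +k b) = pr a + pr b) ->
  (forall r a, pr (ofR r *k a) = r * pr a) ->
  (forall a, Rabs (pr a) <= kabs a) ->
  forall f q (D : R -> K F), (forall t, Kder f t (D t)) -> (forall t, Kder q t (D t)) ->
  forall t, pr (f t) - pr (q t) = pr (f 0) - pr (q 0).
Proof.
  intros Hadd Hsc Hle f q D Hf Hq.
  pose proof (linear_opp pr Hsc) as Hopp.
  apply (derivable_pt_lim_0_const (fun t => pr (f t) - pr (q t))). intros t e He.
  destruct (Hf t (e / 2)) as (d1 & Hd1 & H1); [lra|].
  destruct (Hq t (e / 2)) as (d2 & Hd2 & H2); [lra|].
  assert (Hd : 0 < Rmin d1 d2) by (apply Rmin_case; lra).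
  exists (mkposreal _ Hd). intros h Hh Hhd. simpl in Hhd.
  specialize (H1 h Hh (Rlt_le_trans _ _ _ Hhd (Rmin_l _ _))).
  specialize (H2 h Hh (Rlt_le_trans _ _ _ Hhd (Rmin_r _ _))).
  pose proof (Hle (ofR (/ h) *k (f (t + h) +k -k f t) +k -k D t)) as L1.
  pose proof (Hle (ofR (/ h) *k (q (t + h) +k -k q t) +k -k D t)) as L2.
  rewrite !Hadd, !Hopp, Hsc, Hadd, Hopp in L1, L2.
  replace ((pr (f (t + h)) - pr (q (t + h)) - (pr (f t) - pr (q t))) / h - 0) with
    ((/ h * (pr (f (t + h)) + - pr (f t)) + - pr (D t)) -
     (/ h * (pr (q (t + h)) + - pr (q t)) + - pr (D t))) by (field; auto).
  eapply Rle_lt_trans; [apply Rabs_triang|]. rewrite Rabs_Ropp. lra.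
Qed.

Lemma Kder_unique f q (D : R -> K F) :
  (forall t, Kder f t (D t)) -> (forall t, Kder q t (D t)) -> f 0 = q 0 ->
  forall t, f t = q t.
Proof.
  intros Hf Hq H0 t. apply (re_im_inj L).
  - pose proof (Kder_unique_coord _ (re_add L) (re_scal L) (re_le_abs L) f q D Hf Hq t).
    rewrite H0 in H. lra.
  - pose proof (Kder_unique_coord _ (im_add L) (im_scal L) (im_le_abs L) f q D Hf Hq t).
    rewrite H0 in H. lra.
Qed.

Fixpoint Kpow (w : K F) (m : nat) : K F :=
  match m with O => k1 | S m => w *k Kpow w m end.

Lemma Kpow_mul a b m : Kpow (a *k b) m = Kpow a m *k Kpow b m.
Proof. induction m; simpl; [ring|]. rewrite IHm. ring. Qed.

Lemma Kpow_KofR r m : Kpow (ofR r) m = ofR (r ^ m).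
Proof. induction m; simpl; [symmetry; apply (KofR_1 L)|]. now rewrite IHm, (KofR_mul L). Qed.

Lemma Kprod_repeat (f : tree -> K F) m : Kprod F (map f (repeat bullet m)) = Kpow (f bullet) m.
Proof. induction m; simpl; auto. now rewrite IHm. Qed.

Lemma Ksum_app l1 l2 : Ksum F (l1 ++ l2) = Ksum F l1 +k Ksum F l2.
Proof. induction l1; simpl; [ring|]. rewrite IHl1. ring. Qed.

Lemma KsumN_pascal n (phi : nat -> nat -> K F) :
  KsumN (S n) (fun j => ofR (INR (binom (S n) j)) *k phi j (S n - j)%nat) =
  KsumN n (fun j => ofR (INR (binom n j)) *k phi j (S (n - j))) +k
  KsumN n (fun j => ofR (INR (binom n j)) *k phi (S j) (n - j)%nat).
Proof.
  rewrite KsumN_shift.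
  rewrite (KsumN_ext n _ (fun j => ofR (INR (binom n j)) *k phi (S j) (n - j)%nat +k
                                   ofR (INR (binom n (S j))) *k phi (S j) (n - j)%nat)).
  2:{ intros j _. simpl binom. rewrite plus_INR, (KofR_add L). simpl Nat.sub. ring. }
  rewrite KsumN_add.
  assert (E : KsumN n (fun j => ofR (INR (binom n j)) *k phi j (S (n - j))) =
              KsumN (S n) (fun j => ofR (INR (binom n j)) *k phi j (S n - j)%nat)).
  { cbn [KsumN]. rewrite (binom_small n (S n)) by lia. simpl INR. rewrite (KofR_0 L).
    rewrite (KsumN_ext n _ (fun j => ofR (INR (binom n j)) *k phi j (S n - j)%nat)).
    - ring.
    - intros j Hj. do 2 f_equal. lia. }
  rewrite E, KsumN_shift. simpl binom. simpl Nat.sub.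
  replace (binom n 0) with 1%nat by (destruct n; reflexivity). ring.
Qed.

Lemma Ksum_combos_bullets n (Psi : list tree -> list tree -> K F) :
  Ksum F (map (fun q => Psi (fst q) (snd q)) (combos (repeat bullet_cuts n))) =
  KsumN n (fun j => ofR (INR (binom n j)) *k Psi (repeat bullet j) (repeat bullet (n - j))).
Proof.
  revert Psi. induction n; intro Psi.
  - simpl. rewrite (KofR_1 L). ring.
  - change (combos (repeat bullet_cuts (S n))) with (combos (bullet_cuts :: repeat bullet_cuts n)).
    cbn [combos flat_map bullet_cuts fst snd].
    rewrite app_nil_r, map_app, Ksum_app, !map_map. cbn [fst snd app].
    rewrite (IHn (fun A B => Psi A (bullet :: B))), (IHn (fun A B => Psi (bullet :: A) B)).
    now rewrite (KsumN_pascal n (fun j m => Psi (repeat bullet j) (repeat bullet m))).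
Qed.

Lemma bmul_bushy (a b : tmap F) n :
  bmul F a b (Some (bushy n)) = b None *k (a (Some (bushy n)) *k k1) +k
    KsumN n (fun j => ofR (INR (binom n j)) *k
                        (b (Some (bushy j)) *k Kpow (a (Some bullet)) (n - j))).
Proof.
  unfold bmul, ost. cbn [map Ksum fst snd Kprod fold_right].
  rewrite ost_ne_bushy, !map_map. cbn [fst snd].
  change (fold_right (Kadd F) k0 ?l) with (Ksum F l).
  rewrite (Ksum_combos_bullets n (fun A B => b (Some (Node A)) *k Kprod F (map (fun th => a (Some th)) B))).
  f_equal. apply KsumN_ext. intros j _. now rewrite (Kprod_repeat (fun th => a (Some th))).
Qed.


Lemma openM_coord_ball tau0 (l : tmap F) e :
  openM F (fun b => kabs (b tau0 +k -k l tau0) < e).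
Proof.
  intros k a _ Ua.
  set (m := 2 ^ (k * osize tau0)).
  assert (Hm : 0 < m) by (apply pow_lt; lra).
  exists ((e - kabs (a tau0 +k -k l tau0)) / (2 * m)). split; [apply Rdiv_lt_0_compat; lra|].
  intros b _ Hb. specialize (Hb tau0). unfold fsub in Hb. fold m in Hb.
  replace ((e - kabs (a tau0 +k -k l tau0)) / (2 * m) * m)
    with ((e - kabs (a tau0 +k -k l tau0)) / 2) in Hb by (field; lra).
  eapply Rle_lt_trans; [apply (Kabs_sub_triangle _ (a tau0))|]. lra.
Qed.

Section OneParameterGroup.
Variables (g : R -> tmap F) (x : tmap F).
Hypothesis g_root : forall t, g t None = k1.
Hypothesis g_0 : g 0 = unit_e F.
Hypothesis g_add : forall s t, g (s + t) = bmul F (g s) (g t).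
Hypothesis g_deriv0 : lim0 F (fun h => fscale F (/ h) (fsub F (g h) (g 0))) x.

Lemma g_coord_deriv0 tau : Klim (fun h => ofR (/ h) *k g h (Some tau)) (x (Some tau)).
Proof.
  intros e He.
  destruct (g_deriv0 _ (openM_coord_ball (Some tau) x e)) as (d & Hd & H).
  { rewrite (Kadd_opp_r L), Kabs_0. exact He. }
  exists d; split; auto. intros h H1 H2. specialize (H h H1 H2).
  unfold fscale, fsub in H. rewrite g_0 in H. simpl in H.
  replace (ofR (/ h) *k g h (Some tau)) with (ofR (/ h) *k (g h (Some tau) +k -k k0)) by ring.
  exact H.
Qed.

(* Differentiating [g (t + h) = g t . g h] in [h] at [0]. *)
Lemma g_bushy_deriv n t :
  Kder (fun s => g s (Some (bushy n))) t
    (KsumN n (fun j => ofR (INR (binom n j)) *k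
                         (x (Some (bushy j)) *k Kpow (g t (Some bullet)) (n - j)))).
Proof.
  set (c j := ofR (INR (binom n j)) *k Kpow (g t (Some bullet)) (n - j)).
  replace (KsumN n _) with (KsumN n (fun j => c j *k x (Some (bushy j))))
    by (apply KsumN_ext; intros; unfold c; ring).
  apply (Klim_ext (fun h => KsumN n (fun j => c j *k (ofR (/ h) *k g h (Some (bushy j)))))).
  - intros h _. rewrite g_add, bmul_bushy, g_root.
    transitivity (ofR (/ h) *k KsumN n (fun j => ofR (INR (binom n j)) *k
                    (g h (Some (bushy j)) *k Kpow (g t (Some bullet)) (n - j)))); [|ring].
    rewrite <- KsumN_scal. apply KsumN_ext. intros. unfold c. ring.
  - apply Klim_KsumN. intros j _. apply Klim_scal, g_coord_deriv0.
Qed.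

Lemma g_bullet t : g t (Some bullet) = x (Some bullet) *k ofR t.
Proof.
  revert t.
  apply (Kder_unique (fun s => g s (Some bullet)) (fun s => x (Some bullet) *k ofR s)
           (fun _ => x (Some bullet))).
  - intro t. pose proof (g_bushy_deriv 0 t) as H. simpl in H.
    change (bushy 0) with bullet in H. rewrite (KofR_1 L) in H.
    replace (x (Some bullet)) with (k1 *k (x (Some bullet) *k k1)) by ring. exact H.
  - intro t. pose proof (Kder_KofR (fun s => s) t 1 (derivable_pt_lim_id t)) as H.
    apply (Kder_scal (x (Some bullet))) in H. rewrite (KofR_1 L) in H.
    replace (x (Some bullet) *k k1) with (x (Some bullet)) in H by ring. exact H.
  - rewrite g_0, (KofR_0 L). simpl. ring.
Qed.

Lemma g_bushy n t :
  g t (Some (bushy n)) =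
  KsumN n (fun j => (ofR (INR (binom n j)) *k (x (Some (bushy j)) *k Kpow (x (Some bullet)) (n - j)))
                      *k ofR (t ^ S (n - j) / INR (S (n - j)))).
Proof.
  revert t. apply (Kder_unique (fun t => g t (Some (bushy n))) _
    (fun t => KsumN n (fun j => ofR (INR (binom n j)) *k
                                  (x (Some (bushy j)) *k Kpow (g t (Some bullet)) (n - j))))).
  - apply g_bushy_deriv.
  - intro t.
    replace (KsumN n _) with
      (KsumN n (fun j => (ofR (INR (binom n j)) *k (x (Some (bushy j)) *k Kpow (x (Some bullet)) (n - j)))
                           *k ofR (t ^ (n - j)))).
    + apply Kder_KsumN. intros j _.
      apply Kder_scal, Kder_KofR, derivable_pt_lim_pow_antideriv.
    + apply KsumN_ext. intros j _. rewrite g_bullet, Kpow_mul, Kpow_KofR. ring.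
  - rewrite g_0. change (unit_e F (Some (bushy n))) with k0.
    rewrite <- (KsumN_0 n). apply KsumN_ext. intros j _.
    rewrite pow_i, Rdiv_0_l, (KofR_0 L) by lia. ring.
Qed.

Variable eps : R.
Hypothesis g_1 : g 1 = a_eps F eps.

Lemma x_bullet : x (Some bullet) = ofR eps.
Proof.
  pose proof (g_bullet 1) as H. rewrite g_1, (KofR_1 L) in H.
  replace (x (Some bullet)) with (x (Some bullet) *k k1) by ring. now rewrite <- H.
Qed.

Lemma x_bushy_bernoulli : eps <> 0 ->
  bernoulli_seq (fun n => re L (x (Some (bushy n))) / eps ^ S n).
Proof.
  intro Heps. split.
  - change (bushy 0) with bullet. rewrite x_bullet, (re_KofR L). simpl. field. exact Heps.
  - intros [|m] Hm; [lia|]. set (n := S m).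
    pose proof (f_equal (re L) (g_bushy n 1)) as H.
    rewrite g_1, x_bullet in H. change (a_eps F eps (Some (bushy n))) with k0 in H.
    rewrite <- (KofR_0 L), (re_KofR L) in H.
    rewrite (KsumN_ext n _ (fun j => ofR (INR (binom n j) * eps ^ (n - j) / INR (S (n - j)))
                                         *k x (Some (bushy j)))) in H.
    2:{ intros j _. rewrite Kpow_KofR, pow1. unfold Rdiv.
        rewrite !(KofR_mul L), (KofR_1 L). ring. }
    rewrite re_KsumN_scal in H.
    apply (Rmult_eq_reg_r (eps ^ S n)); [|apply pow_nonzero; exact Heps].
    rewrite Rmult_0_l, H, Rmult_comm, scal_sum. apply sum_eq. intros j Hj.
    replace (eps ^ S n) with (eps ^ S j * eps ^ (n - j)) by (rewrite <- pow_add; f_equal; lia).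
    replace (INR (n - j + 1)) with (INR (S (n - j))) by (f_equal; lia).
    assert (eps ^ S j <> 0) by (apply pow_nonzero; exact Heps).
    assert (0 < INR (S (n - j))) by (apply lt_0_INR; lia).
    field. lra.
Qed.

End OneParameterGroup.

Lemma inE_bushy_bound k (x : tmap F) : inE F k x ->
  exists C, forall n, Rabs (re L (x (Some (bushy n)))) <= C * (2 ^ k) ^ S n.
Proof.
  intros (_ & _ & C & HC). exists C. intro n.
  eapply Rle_trans; [apply (re_le_abs L)|].
  rewrite <- pow_mult, <- tsize_bushy. apply (HC (Some (bushy n))).
Qed.

Theorem a_eps_not_in_exp_image eps : eps <> 0 -> ~ in_exp_image F (a_eps F eps).
Proof.
  intros Heps (x & (k & Hx) & g & ((Hg & Hg0 & Hadd & _) & Hder & Hg1)).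
  pose proof (x_bushy_bernoulli g x (fun t => proj1 (Hg t)) Hg0 Hadd Hder eps Hg1 Heps) as Hz.
  destruct (inE_bushy_bound k x Hx) as [C HC].
  set (M := 2 ^ k / Rabs eps).
  apply (bernoulli_not_exp_bounded _ (C * M) M Hz). intro n.
  assert (Habs : 0 < Rabs eps) by (apply Rabs_pos_lt; exact Heps).
  assert (HE : 0 < Rabs eps ^ S n) by (apply pow_lt; exact Habs).
  rewrite Rabs_div, <- RPow_abs by (apply pow_nonzero; exact Heps).
  apply (Rmult_le_reg_r (Rabs eps ^ S n)); [exact HE|].
  replace (Rabs (re L (x (Some (bushy n)))) / Rabs eps ^ S n * Rabs eps ^ S n)
    with (Rabs (re L (x (Some (bushy n))))) by (field; lra).
  replace (C * M * M ^ n * Rabs eps ^ S n) with (C * (2 ^ k) ^ S n).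
  - apply HC.
  - unfold M, Rdiv. rewrite Rpow_mult_distr, pow_inv. simpl. field.
    split; [apply pow_nonzero|]; lra.
Qed.

Lemma a_eps_sub_unit eps tau : fsub F (a_eps F eps) (unit_e F) tau = ofR (delta_bullet eps tau).
Proof.
  unfold fsub. destruct tau as [[[|? ?]]|]; simpl; rewrite ?(KofR_0 L); ring.
Qed.

Lemma a_eps_invariant eps : invariant F (a_eps F eps).
Proof.
  intros t u H.
  transitivity (fsub F (a_eps F eps) (unit_e F) (Some t) +k k0); [unfold fsub; simpl; ring|].
  transitivity (fsub F (a_eps F eps) (unit_e F) (Some u) +k k0); [|unfold fsub; simpl; ring].
  now rewrite !a_eps_sub_unit, (delta_bullet_invariant eps t u H).
Qed.

Lemma inE_a_eps_sub_unit eps : inE F 0 (fsub F (a_eps F eps) (unit_e F)).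
Proof.
  split; [|split].
  - rewrite a_eps_sub_unit. apply (KofR_0 L).
  - intros t u H. now rewrite !a_eps_sub_unit, (delta_bullet_invariant eps t u H).
  - exists (Rabs eps). intro tau. rewrite a_eps_sub_unit, (Kabs_KofR L), Rmult_1_r.
    apply delta_bullet_abs_le.
Qed.

Lemma inG_a_eps eps : inG F (a_eps F eps).
Proof.
  split; [reflexivity|split; [apply a_eps_invariant|]].
  exists (Rabs eps + 1), 1. pose proof (Rabs_pos eps).
  split; [lra|split; [lra|]]. intro tau. rewrite pow1, Rmult_1_r.
  destruct tau as [[[|? ?]]|]; simpl.
  - rewrite (Kabs_KofR L). lra.
  - rewrite Kabs_0. lra.
  - rewrite <- (KofR_1 L), (Kabs_KofR L), Rabs_R1. lra.
Qed.

Lemma a_eps_0 : a_eps F 0 = unit_e F.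
Proof.
  apply functional_extensionality. intros [[[|? ?]]|]; simpl; auto. apply (KofR_0 L).
Qed.

Lemma a_eps_continuous t : cont_at F (fun eps => fsub F (a_eps F eps) (unit_e F)) t.
Proof.
  intros U HU Ut.
  destruct (HU 0%nat _ (inE_a_eps_sub_unit t) Ut) as (r & Hr & Hball).
  exists r. split; auto. intros s Hs.
  apply Hball; [apply inE_a_eps_sub_unit|]. intro tau.
  unfold fsub at 1. rewrite !a_eps_sub_unit, Kabs_KofR_sub, Rmult_1_r.
  eapply Rle_trans; [apply delta_bullet_sub_abs_le|lra].
Qed.

Theorem exp_image_no_id_nbhd : ~ exp_image_contains_id_nbhd F.
Proof.
  intros (V & HV & V0 & Hexp).
  assert (Hz : inE F 0 (fzero F)).
  { split; [reflexivity|split; [intros ? ? ?; reflexivity|]].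
    exists 1. intro. unfold fzero. rewrite Kabs_0. simpl. lra. }
  destruct (HV 0%nat (fzero F) Hz V0) as (r & Hr & Hball).
  apply (a_eps_not_in_exp_image (r / 2)); [lra|].
  apply Hexp; [apply inG_a_eps|].
  apply Hball; [apply inE_a_eps_sub_unit|]. intro tau.
  unfold fsub at 1. rewrite a_eps_sub_unit. unfold fzero.
  replace (ofR (delta_bullet (r / 2) tau) +k -k k0) with (ofR (delta_bullet (r / 2) tau)) by ring.
  rewrite (Kabs_KofR L), Rmult_1_r.
  eapply Rle_trans; [apply delta_bullet_abs_le|]. rewrite Rabs_right; lra.
Qed.

End Scalars.

Definition Rsc_laws : ScalLaws Rsc.
Proof.
  apply (@Build_ScalLaws Rsc (fun a => a) (fun _ => 0)); simpl; intros; try ring.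
  - apply Rabs_triang.
  - apply Rabs_mult.
  - apply Rabs_pos.
  - apply Rle_refl.
  - rewrite Rabs_R0. apply Rabs_pos.
  - assumption.
Defined.

Lemma Cabs_Cmod z : Cabs z = Cmod z.
Proof. unfold Cabs, Cmod. f_equal. ring. Qed.

Definition Csc_laws : ScalLaws Csc.
Proof.
  apply (@Build_ScalLaws Csc fst snd); simpl; unfold Cadd, Cmul, Copp; simpl;
    try (intros; repeat match goal with p : Cx |- _ => destruct p end; simpl;
         solve [f_equal; ring | ring]);
    intros; rewrite ?Cabs_Cmod.
  - apply Cmod_triangle.
  - apply Cmod_mult.
  - apply (Cmod_R r).
  - apply Cmod_ge_0.
  - apply re_le_Cmod.
  - eapply Rle_trans; [apply Rmax_r|apply Rmax_Cmod].
  - destruct a, b; simpl in *; congruence.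
Defined.

Theorem proposition5p6 :
  ~ exp_image_contains_id_nbhd Csc /\
  ~ exp_image_contains_id_nbhd Rsc /\
  (forall eps : R, eps <> 0 ->
     inG Rsc (a_eps Rsc eps) /\ ~ in_exp_image Rsc (a_eps Rsc eps)) /\
  a_eps Rsc 0 = unit_e Rsc /\
  (forall t : R, cont_at Rsc (fun eps => fsub Rsc (a_eps Rsc eps) (unit_e Rsc)) t).
Proof.
  split; [exact (exp_image_no_id_nbhd Csc Csc_laws)|].
  split; [exact (exp_image_no_id_nbhd Rsc Rsc_laws)|].
  split; [intros eps Heps; split|split].
  - exact (inG_a_eps Rsc Rsc_laws eps).
  - exact (a_eps_not_in_exp_image Rsc Rsc_laws eps Heps).
  - exact (a_eps_0 Rsc Rsc_laws).
  - exact (a_eps_continuous Rsc Rsc_laws).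
Qed.
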